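(* For all $i\in[1,n-1]$, $j'(i)\le j'(i+1)$.
   Context: Let $v_1,\dots,v_n$ be points of a metric space with metric $|\cdot|$ (symmetric, nonnegative, $|v_iv_j|=0$ iff $i=j$, triangle inequality). For $i\le j$ let $d_P(v_i,v_j)=\sum_{k=i}^{j-1}|v_kv_{k+1}|$ and $d_P(v_j,v_i)=d_P(v_i,v_j)$. For $1\le i\le j\le n$: $\beta(i,j)=\max_{k\in[i,j]}\min\{d_P(v_i,v_k),|v_iv_j|+d_P(v_k,v_j)\}$; $\gamma(i,j)=|v_iv_j|+d_P(v_j,v_n)$ if $j<n$ and $\gamma(i,n)=0$. For $i\in[1,n]$, $j'(i)$ is the smallest index $j\in[i,n]$ with $\gamma(i,j)\le\beta(i,j)$. *)

From Stdlib Require Import Reals Lra Lia List Arith.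
Open Scope R_scope.

Definition sum_range (a b : nat) (f : nat -> R) : R :=
  fold_right (fun k acc => f k + acc) 0 (seq a (b - a)).

Section Defs.
Variables (X : Type) (d : X -> X -> R) (n : nat) (v : nat -> X).

Definition dP (i j : nat) : R :=
  sum_range (Nat.min i j) (Nat.max i j) (fun k => d (v k) (v (S k))).

(* beta(i,j) = max_{k in [i,j]} min{ d_P(v_i,v_k), |v_i v_j| + d_P(v_k,v_j) } *)
Definition beta_term (i j k : nat) : R :=
  Rmin (dP i k) (d (v i) (v j) + dP k j).

Definition beta (i j : nat) : R :=
  fold_right (fun k acc => Rmax (beta_term i j k) acc) (beta_term i j i)
             (seq i (S j - i)).

Definition gamma (i j : nat) : R :=
  if (j <? n)%nat then d (v i) (v j) + dP j n else 0.

Fixpoint first_from (P : nat -> bool) (j fuel : nat) : nat :=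
  match fuel with
  | O => j
  | S f => if P j then j else first_from P (S j) f
  end.

Definition goodb (i j : nat) : bool :=
  if Rle_dec (gamma i j) (beta i j) then true else false.

(* j'(i): smallest j in [i,n] with gamma(i,j) <= beta(i,j).
   The search over [i, n-1] defaults to n, which always qualifies since
   gamma(i,n) = 0 <= beta(i,n). *)
Definition jprime (i : nat) : nat := first_from (goodb i) i (n - i).

End Defs.

From Stdlib Require Import Reals Lra Lia List Arith.
Open Scope R_scope.

(* If [v_j] is a valid exit for [v_(i+1)] (gamma <= beta), it is one for [v_i]
   too: going back one vertex adds [|v_i v_(i+1)|] to the prefix part of each
   term of beta, which by the triangle inequality dominates the growth of
   gamma, and the witness [k] of beta for [i+1] is still admissible for [i].
   Hence the first valid exit cannot move backwards as [i] increases. *)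

Lemma first_from_bounds (P : nat -> bool) (fuel j : nat) :
  (j <= first_from P j fuel <= j + fuel)%nat.
Proof.
  revert j; induction fuel as [|f IH]; intros j; simpl; [lia|].
  destruct (P j); [lia|]. specialize (IH (S j)). lia.
Qed.

Lemma first_from_true (P : nat -> bool) (fuel j : nat) :
  (first_from P j fuel < j + fuel)%nat -> P (first_from P j fuel) = true.
Proof.
  revert j; induction fuel as [|f IH]; intros j; simpl; [lia|].
  destruct (P j) eqn:E; [auto|].
  intros H. apply IH. lia.
Qed.

Lemma first_from_le (P : nat -> bool) (fuel j j0 : nat) :
  P j0 = true -> (j <= j0 < j + fuel)%nat -> (first_from P j fuel <= j0)%nat.
Proof.
  revert j; induction fuel as [|f IH]; intros j HP Hr; simpl; [lia|].
  destruct (P j) eqn:E; [lia|].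
  destruct (Nat.eq_dec j j0) as [->|Hne]; [congruence|].
  apply IH; [exact HP|lia].
Qed.

Lemma first_from_mono (P Q : nat -> bool) (a fuel : nat) :
  (forall j, (S a <= j < S a + fuel)%nat -> Q j = true -> P j = true) ->
  (first_from P a (S fuel) <= first_from Q (S a) fuel)%nat.
Proof.
  intros HQP.
  set (j0 := first_from Q (S a) fuel).
  pose proof (first_from_bounds Q fuel (S a)) as Hb; fold j0 in Hb.
  destruct (Nat.eq_dec j0 (S a + fuel)) as [Hend|Hlt].
  - pose proof (first_from_bounds P (S fuel) a). lia.
  - apply first_from_le; [|lia].
    apply HQP; [lia|]. apply first_from_true. lia.
Qed.

Lemma fold_Rmax_ge (f : nat -> R) (a k : nat) (l : list nat) :
  In k l -> f k <= fold_right (fun k acc => Rmax (f k) acc) (f a) l.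
Proof.
  induction l as [|x l IH]; simpl; [tauto|].
  intros [->|Hk]; [apply Rmax_l|].
  eapply Rle_trans; [apply IH, Hk|apply Rmax_r].
Qed.

Lemma fold_Rmax_attained (f : nat -> R) (a : nat) (l : list nat) (c : R) :
  c <= fold_right (fun k acc => Rmax (f k) acc) (f a) l ->
  c <= f a \/ exists k, In k l /\ c <= f k.
Proof.
  induction l as [|x l IH]; simpl; intros H; [auto|].
  unfold Rmax in H. destruct (Rle_dec (f x) _).
  - destruct (IH H) as [?|[k [? ?]]]; [auto|right; exists k; auto].
  - right; exists x; auto.
Qed.

Lemma sum_range_cons (a b : nat) (f : nat -> R) :
  (a < b)%nat -> sum_range a b f = f a + sum_range (S a) b f.
Proof.
  intros H. unfold sum_range.
  replace (b - a)%nat with (S (b - S a)) by lia. reflexivity.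
Qed.

Section Monotonicity.

Variables (X : Type) (d : X -> X -> R) (n : nat) (v : nat -> X).
Hypothesis d_tri : forall x y z, d x z <= d x y + d y z.

Lemma dP_cons (i k : nat) :
  (i < k)%nat -> dP X d v i k = d (v i) (v (S i)) + dP X d v (S i) k.
Proof.
  intros H. unfold dP.
  rewrite !Nat.min_l, !Nat.max_r by lia. apply sum_range_cons. exact H.
Qed.

Lemma beta_term_le_beta (i j k : nat) :
  (i <= k <= j)%nat -> beta_term X d v i j k <= beta X d v i j.
Proof. intros Hk. apply fold_Rmax_ge, in_seq. lia. Qed.

Lemma beta_attained (i j : nat) (c : R) :
  (i <= j)%nat -> c <= beta X d v i j ->
  exists k, (i <= k <= j)%nat /\ c <= beta_term X d v i j k.
Proof.
  intros Hij H.
  destruct (fold_Rmax_attained _ _ _ _ H) as [Hi|[k [Hk Hc]]].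
  - exists i. split; [lia|exact Hi].
  - apply in_seq in Hk. exists k. split; [lia|exact Hc].
Qed.

Lemma gamma_le_beta_pred (i j : nat) :
  (S i <= j < n)%nat ->
  gamma X d n v (S i) j <= beta X d v (S i) j ->
  gamma X d n v i j <= beta X d v i j.
Proof.
  intros Hj Hgood.
  unfold gamma in *. replace (j <? n)%nat with true in * by (symmetry; apply Nat.ltb_lt; lia).
  destruct (beta_attained _ _ _ (proj1 Hj) Hgood) as [k [Hk Hterm]].
  eapply Rle_trans; [|apply (beta_term_le_beta i j k); lia].
  unfold beta_term in *.
  pose proof (Rmin_l (dP X d v (S i) k) (d (v (S i)) (v j) + dP X d v k j)).
  pose proof (Rmin_r (dP X d v (S i) k) (d (v (S i)) (v j) + dP X d v k j)).
  pose proof (d_tri (v i) (v (S i)) (v j)).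
  rewrite (dP_cons i k) by lia.
  apply Rmin_glb; lra.
Qed.

Lemma jprime_le_succ (i : nat) :
  (i < n)%nat -> (jprime X d n v i <= jprime X d n v (S i))%nat.
Proof.
  intros Hi. unfold jprime.
  replace (n - i)%nat with (S (n - S i)) by lia.
  apply first_from_mono. intros j Hj. unfold goodb.
  destruct (Rle_dec (gamma X d n v (S i) j) _) as [G|]; [|discriminate].
  destruct (Rle_dec (gamma X d n v i j) _) as [|NG]; [reflexivity|].
  exfalso. apply NG, gamma_le_beta_pred; [lia|exact G].
Qed.

End Monotonicity.

(* Only the triangle inequality is needed. *)
Theorem lemma5 (X : Type) (d : X -> X -> R)
  (d_nonneg : forall x y, 0 <= d x y)
  (d_sym : forall x y, d x y = d y x)
  (d_zero : forall x y, d x y = 0 <-> x = y)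
  (d_tri : forall x y z, d x z <= d x y + d y z)
  (n : nat) (v : nat -> X)
  (v_distinct : forall i j, (1 <= i <= n)%nat -> (1 <= j <= n)%nat ->
                 v i = v j -> i = j)
  (i : nat) (Hi : (1 <= i <= n - 1)%nat) :
  (jprime X d n v i <= jprime X d n v (S i))%nat.
Proof.
  apply jprime_le_succ; [exact d_tri|lia].
Qed.
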